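(* Let $A$ be a finite-dimensional algebra (not necessarily associative) over an algebraically closed field $K$, let $\delta,\gamma\in K$, and let $D$ be a $(\delta,\gamma)$-derivation of $A$, with root space decomposition $A=\bigoplus_{\lambda}A_\lambda$. Suppose there are roots $\lambda,\mu,\eta,\theta,\xi$ of $D$ (not necessarily distinct) such that $$0\ne A_\lambda A_\eta\subseteq A_\theta,\quad A_\theta A_\mu\ne 0,\qquad 0\ne A_\eta A_\mu\subseteq A_\xi,\quad A_\lambda A_\xi\ne 0,$$ and $(\delta^2-\delta)\lambda\ne(\gamma^2-\gamma)\mu$. Then the root space decomposition of $A$ with respect to $D$ is a non-semigroup grading of $A$.
   Context: An algebra means a vector space $A$ with a bilinear multiplication, with no identities assumed. For fixed $\delta,\gamma\in K$, a $(\delta,\gamma)$-derivation of $A$ is a linear map $D:A\to A$ with $D(xy)=\delta D(x)y+\gamma xD(y)$ for all $x,y\in A$. The root space decomposition with respect to $D$ is $A=\bigoplus_\lambda A_\lambda$ over the eigenvalues (roots) $\lambda$ of $D$, where $A_\lambda$ is the generalized eigenspace of $D$ for $\lambda$. A grading of $A$ over a set $\Gamma$ is a decomposition $A=\bigoplus_{g\in\Gamma}A_g$ together with a partial binary operation $*$ on $\Gamma$, defined for exactly those pairs $(g,h)$ with $A_gA_h\ne0$, such that $A_gA_h\subseteq A_{g*h}$ in that case. The grading is a semigroup grading if there is a semigroup $(G,\cdot)$ and an injective map $\Gamma\to G$ under which $g*h=g\cdot h$ whenever $A_gA_h\ne0$; otherwise it is a non-semigroup grading. *)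

From HB Require Import structures.
From mathcomp Require Import all_boot all_order all_algebra.
Set Implicit Arguments. Unset Strict Implicit. Unset Printing Implicit Defensive.
Import GRing.Theory.
Local Open Scope ring_scope.

Section Defs.
Variables (K : fieldType) (V : vectType K).

Definition bilinear_mul (mul : V -> V -> V) : Prop :=
  (forall (a : K) (x y z : V), mul (a *: x + y) z = a *: mul x z + mul y z) /\
  (forall (a : K) (x y z : V), mul x (a *: y + z) = a *: mul x y + mul x z).

Definition dg_derivation (mul : V -> V -> V) (delta gamma : K) (D : 'End(V)) : Prop :=
  forall x y : V, D (mul x y) = delta *: mul (D x) y + gamma *: mul x (D y).

(* generalized eigenspace of D for lambda: kernel of (D - lambda)^(dim V) *)
Definition root_space (D : 'End(V)) (lambda : K) : {vspace V} :=
  lker (iter (\dim (fullv : {vspace V})) (fun f => ((D - lambda *: \1) \o f)%VF) \1%VF).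

Definition is_root (D : 'End(V)) (lambda : K) : bool := root_space D lambda != 0%VS.

Definition prod_nonzero (mul : V -> V -> V) (U W : {vspace V}) : Prop :=
  exists x y, x \in U /\ y \in W /\ mul x y != 0.

Definition prod_sub (mul : V -> V -> V) (U W X : {vspace V}) : Prop :=
  forall x y, x \in U -> y \in W -> mul x y \in X.

(* A = (+)_{g in Gamma} A_g, with partial operation op (relevant only where
   A_g A_h <> 0) satisfying A_g A_h \subseteq A_{g*h}. *)
Definition is_grading (mul : V -> V -> V) (Gamma : eqType)
    (A : Gamma -> {vspace V}) (op : Gamma -> Gamma -> Gamma) : Prop :=
  (forall s : seq Gamma, uniq s -> directv (\sum_(g <- s) A g)) /\
  (exists s : seq Gamma, (\sum_(g <- s) A g)%VS = fullv) /\
  (forall g h, prod_nonzero mul (A g) (A h) -> prod_sub mul (A g) (A h) (A (op g h))).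

Definition semigroup_grading (mul : V -> V -> V) (Gamma : eqType)
    (A : Gamma -> {vspace V}) (op : Gamma -> Gamma -> Gamma) : Prop :=
  exists (G : Type) (m : G -> G -> G) (phi : Gamma -> G),
    associative m /\ injective phi /\
    forall g h, prod_nonzero mul (A g) (A h) -> phi (op g h) = m (phi g) (phi h).

Definition roots_of (D : 'End(V)) : eqType := {lambda : K | is_root D lambda}.

Definition root_decomp (D : 'End(V)) (g : roots_of D) : {vspace V} :=
  root_space D (val g).

Definition root_decomp_nonsemigroup_grading (mul : V -> V -> V) (D : 'End(V)) : Prop :=
  (exists op, is_grading mul (@root_decomp D) op) /\
  (forall op, is_grading mul (@root_decomp D) op ->
     ~ semigroup_grading mul (@root_decomp D) op).

End Defs.

(* For a (delta,gamma)-derivation, [(D - (delta a + gamma b))^(p+q)]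
   kills [xy] as soon as [(D - a)^p] kills [x] and [(D - b)^q] kills [y], so
   [A_a A_b] lies in [A_(delta a + gamma b)].  Since generalized eigenspaces are
   independent and, over an algebraically closed field, span the space, the root
   spaces form a grading, and in any such grading the product of roots [a], [b]
   with [A_a A_b <> 0] is forced to be [delta a + gamma b].  A semigroup
   embedding would make this operation associative on [(lam eta) mu] and
   [lam (eta mu)], i.e. [delta theta + gamma mu = delta lam + gamma xi] with
   [theta = delta lam + gamma eta] and [xi = delta eta + gamma mu]; this is
   exactly [(delta^2 - delta) lam = (gamma^2 - gamma) mu]. *)

From mathcomp Require Import all_boot all_order all_algebra.
From mathcomp Require Import ring.
Import GRing.Theory passmx.
Local Open Scope ring_scope.

Set Implicit Arguments.
Unset Strict Implicit.
Unset Printing Implicit Defensive.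

Section LfunPower.
Variables (K : fieldType) (V : vectType K) (f : 'End(V)).

Definition lfun_pow k : 'End(V) := iter k (fun g => (f \o g)%VF) \1%VF.

Lemma lfun_powE k x : lfun_pow k x = iter k f x.
Proof.
elim: k => [|k IHk]; first by rewrite /lfun_pow /= id_lfunE.
by rewrite /lfun_pow iterS comp_lfunE -/(lfun_pow k) IHk.
Qed.

Lemma iter_lfun0 k : iter k f 0 = 0.
Proof. by elim: k => //= k ->; rewrite linear0. Qed.

Lemma iter_lfunD k x y : iter k f (x + y) = iter k f x + iter k f y.
Proof. by elim: k => //= k ->; rewrite linearD. Qed.

Lemma iter_lfunZ k a x : iter k f (a *: x) = a *: iter k f x.
Proof. by elim: k => //= k ->; rewrite linearZ. Qed.

Lemma mem_lker_pow k x : (x \in lker (lfun_pow k)) = (iter k f x == 0).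
Proof. by rewrite memv_ker lfun_powE. Qed.

Lemma lker_pow_mono k l : (k <= l)%N -> (lker (lfun_pow k) <= lker (lfun_pow l))%VS.
Proof.
move=> le_kl; apply/subvP => x; rewrite !mem_lker_pow => /eqP kx0.
by rewrite -(subnK le_kl) iterD kx0 iter_lfun0.
Qed.

Lemma lker_pow_stable k : lker (lfun_pow k) = lker (lfun_pow k.+1) ->
  forall j, lker (lfun_pow (k + j)) = lker (lfun_pow k).
Proof.
move=> stable_k; elim=> [|j IHj]; first by rewrite addn0.
apply/eqP; rewrite eqEsubv (@lker_pow_mono k) ?leq_addr // andbT.
rewrite -[X in (_ <= X)%VS]IHj.
apply/subvP => x; rewrite !mem_lker_pow addnS -addSn !iterD => x0.
by rewrite -mem_lker_pow stable_k mem_lker_pow.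
Qed.

Lemma lker_pow_growth k :
  (exists2 i, (i < k)%N & lker (lfun_pow i) = lker (lfun_pow i.+1)) \/
  (k <= \dim (lker (lfun_pow k)))%N.
Proof.
elim: k => [|k [[i lt_ik stable_i] | IHk]]; first by right.
  by left; exists i => //; apply: ltnW.
have [stable_k | grow_k] := eqVneq (lker (lfun_pow k)) (lker (lfun_pow k.+1)).
  by left; exists k.
right; apply: leq_ltn_trans IHk _; rewrite ltn_neqAle dimv_leqif_eq.
  by rewrite grow_k dimvS // lker_pow_mono.
exact: lker_pow_mono.
Qed.

Lemma lker_pow_dimv j :
  lker (lfun_pow (\dim {:V} + j)) = lker (lfun_pow (\dim {:V})).
Proof.
have [[i lt_in stable_i] | full] := lker_pow_growth (\dim {:V}).
  have le_in := ltnW lt_in.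
  by rewrite -(subnKC le_in) -addnA !lker_pow_stable.
have lker_full k : (\dim {:V} <= k)%N -> lker (lfun_pow k) = fullv.
  move=> le_nk; apply/eqP; rewrite eqEdim subvf.
  exact: leq_trans full (dimvS (lker_pow_mono le_nk)).
by rewrite !lker_full ?leq_addr.
Qed.

Lemma iter_dimv_eq0 k x : iter k f x = 0 -> iter (\dim {:V}) f x = 0.
Proof.
move=> kx0; apply/eqP; rewrite -mem_lker_pow -(lker_pow_dimv k) mem_lker_pow.
by rewrite iterD kx0 iter_lfun0.
Qed.

End LfunPower.

Section BilinearProduct.
Variables (K : fieldType) (V : vectType K) (mul : V -> V -> V).
Hypothesis mul_bilinear : bilinear_mul mul.

Lemma mul0l z : mul 0 z = 0.
Proof.
have := mul_bilinear.1 1 0 0 z; rewrite !scale1r !addr0 => h.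
by apply: (addrI (mul 0 z)); rewrite -h addr0.
Qed.

Lemma mul0r z : mul z 0 = 0.
Proof.
have := mul_bilinear.2 1 z 0 0; rewrite !scale1r !addr0 => h.
by apply: (addrI (mul z 0)); rewrite -h addr0.
Qed.

Lemma mulZl a x z : mul (a *: x) z = a *: mul x z.
Proof. by have := mul_bilinear.1 a x 0 z; rewrite !addr0 mul0l addr0. Qed.

Lemma mulZr a x z : mul z (a *: x) = a *: mul z x.
Proof. by have := mul_bilinear.2 a z x 0; rewrite !addr0 mul0r addr0. Qed.

Lemma mulBl x y z : mul (x - y) z = mul x z - mul y z.
Proof. by have := mul_bilinear.1 (-1) y x z; rewrite !scaleN1r !(addrC (- _)). Qed.

Lemma mulBr x y z : mul z (x - y) = mul z x - mul z y.
Proof. by have := mul_bilinear.2 (-1) z y x; rewrite !scaleN1r !(addrC (- _)). Qed.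

End BilinearProduct.

Section DerivationRootSpaces.
Variables (K : fieldType) (V : vectType K) (mul : V -> V -> V).
Hypothesis mul_bilinear : bilinear_mul mul.
Variables (delta gamma : K) (D : 'End(V)).
Hypothesis D_derivation : dg_derivation mul delta gamma D.

Local Notation shift a := (D - a *: \1%VF).

Lemma mem_root_space a x :
  (x \in root_space D a) = (iter (\dim {:V}) (shift a) x == 0).
Proof. exact: mem_lker_pow. Qed.

Lemma dg_derivation_shift a b u v :
  shift (delta * a + gamma * b) (mul u v) =
  delta *: mul (shift a u) v + gamma *: mul u (shift b v).
Proof.
rewrite !(add_lfunE, opp_lfunE, scale_lfunE, id_lfunE) D_derivation.
rewrite !(mulBl mul_bilinear, mulBr mul_bilinear).
rewrite !(mulZl mul_bilinear, mulZr mul_bilinear).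
by rewrite scalerDl opprD !scalerBr !scalerA addrACA.
Qed.

(* Leibniz rule: every term of the expansion of the left-hand side carries at
   least [p] shifts on [u] or at least [q] shifts on [v]. *)
Lemma iter_shift_mul_eq0 a b p q u v :
  iter p (shift a) u = 0 -> iter q (shift b) v = 0 ->
  iter (p + q) (shift (delta * a + gamma * b)) (mul u v) = 0.
Proof.
elim: p u q v => [|p IHp] u q v.
  by move=> u0; rewrite /= in u0; rewrite u0 (mul0l mul_bilinear) iter_lfun0.
elim: q v => [|q IHq] v pu0.
  by move=> v0; rewrite /= in v0; rewrite v0 (mul0r mul_bilinear) iter_lfun0.
move=> qv0; rewrite addnS iterSr dg_derivation_shift.
rewrite iter_lfunD !iter_lfunZ.
by rewrite {1}addSnnS IHp ?IHq -?iterSr // !scaler0 addr0.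
Qed.

Lemma mul_root_space a b x y :
  x \in root_space D a -> y \in root_space D b ->
  mul x y \in root_space D (delta * a + gamma * b).
Proof.
rewrite !mem_root_space => /eqP xa0 /eqP yb0; apply/eqP.
exact: iter_dimv_eq0 (iter_shift_mul_eq0 xa0 yb0).
Qed.

End DerivationRootSpaces.

Section GeneralizedEigenspaces.
Variable K : fieldType.

Lemma kermxpolyS_mulr m (M : 'M[K]_m) p q :
  (kermxpoly M p <= kermxpoly M (p * q))%MS.
Proof.
case: m => [|m] in M *; first by rewrite thinmx0 sub0mx.
apply/sub_kermxP.
by rewrite rmorphM /= -mulmxE mulmxA mulmx_ker mul0mx.
Qed.

Lemma sum_kermxpoly_sub_prod m (M : 'M[K]_m) (t : seq K) (p : K -> {poly K}) :
  (\sum_(b <- t) kermxpoly M (p b) <= kermxpoly M (\prod_(b <- t) p b))%MS.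
Proof.
elim: t => [|b t IHt]; first by rewrite !big_nil sub0mx.
rewrite !big_cons addsmx_sub kermxpolyS_mulr /=.
by apply: submx_trans IHt _; rewrite mulrC kermxpolyS_mulr.
Qed.

Lemma geigenspace_cap_sum_eq0 m (M : 'M[K]_m) a t : a \notin t ->
  (geigenspace M a :&: \sum_(b <- t) geigenspace M b)%MS = 0.
Proof.
move=> a_notin_t; apply/eqP; rewrite -submx0.
apply: submx_trans (capmxS (submx_refl _) (sum_kermxpoly_sub_prod M t _)) _.
rewrite mxdirect_kermxpoly ?submx_refl //.
apply: coprimep_expl; rewrite coprimep_sym coprimep_XsubC /root horner_prod.
rewrite prodf_seq_neq0; apply/allP => b b_t /=.
rewrite horner_exp hornerXsubC expf_neq0 // subr_eq0.
by apply: contraNneq a_notin_t => ->.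
Qed.

Lemma geigenspace_iter m (M : 'M[K]_m) a :
  kermx (iter m (fun A => A *m (M - a%:M)) 1%:M) = geigenspace M a.
Proof.
case: m => [|m] in M *; first by rewrite !thinmx0.
have iterE k : iter k (fun A => A *m (M - a%:M)) 1%:M = (M - a%:M) ^+ k.
  by elim: k => [|k IHk] //=; rewrite IHk exprSr mulmxE.
by rewrite geigenspaceE iterE.
Qed.

End GeneralizedEigenspaces.

(* Over an algebraically closed field the characteristic polynomial splits, and
   Cayley-Hamilton puts the whole space in the kernel of the product of the
   [(X - a)^n] over its roots [a], where [n] is the size of [M]. *)
Lemma sum_geigenspace_full (K : closedFieldType) m (M : 'M[K]_m) :
  exists s : seq K, (1%:M <= \sum_(a <- s) geigenspace M a)%MS.
Proof.
case: m => [|m] in M *; first by exists [::]; rewrite thinmx0 sub0mx.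
have [rs char_rs] := closed_field_poly_normal (char_poly M).
rewrite (monicP (char_poly_monic M)) scale1r in char_rs.
have size_rs : size rs = m.+1.
  by have := size_char_poly M; rewrite char_rs size_prod_XsubC => -[].
set s := undup rs; exists s.
rewrite (big_nth 0) big_mkord.
have coprime_s : {in xpredT &, forall i j : 'I_(size s), j != i ->
    coprimep (('X - (s`_i)%:P) ^+ m.+1) (('X - (s`_j)%:P) ^+ m.+1)}.
  move=> i j _ _ ji; rewrite coprimep_expr ?coprimep_expl // coprimep_XsubC2 //.
  by rewrite subr_eq0 nth_uniq ?undup_uniq.
have /eqmxP/andP[prod_sub_sum _] := kermxpoly_prod M coprime_s.
apply: submx_trans prod_sub_sum.
rewrite -(big_mkord xpredT (fun i => ('X - (s`_i)%:P) ^+ m.+1)).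
rewrite -(big_nth 0 xpredT (fun a => ('X - a%:P) ^+ m.+1)).
suff /kermxpoly_min/eqmxP/andP[] :
  mxminpoly M %| \prod_(a <- s) ('X - a%:P) ^+ m.+1 by [].
apply: dvdp_trans (mxminpoly_dvd_char M) _.
rewrite char_rs -prodr_undup_exp_count -/s.
elim: (s) => [|a t IHt]; first by rewrite !big_nil dvdpp.
by rewrite !big_cons dvdp_mul // dvdp_exp2l // -size_rs count_size.
Qed.

Section VsofSums.
Variables (K : fieldType) (V : vectType K) (e : (\dim {:V}).-tuple V).
Hypothesis e_basis : basis_of {:V} e.

Lemma vsof_addsmx (A B : 'M[K]_(\dim {:V})) :
  vsof e (A + B)%MS = (vsof e A + vsof e B)%VS.
Proof.
apply/eqP; rewrite eqEsubv (vsof_sub e_basis) addsmx_sub -!(vsof_sub e_basis).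
by rewrite addvSl addvSr subv_add !(sub_vsof e_basis) addsmxSl addsmxSr.
Qed.

Lemma vsof_sumsmx (t : seq K) (F : K -> 'M[K]_(\dim {:V})) :
  vsof e (\sum_(b <- t) F b)%MS = (\sum_(b <- t) vsof e (F b))%VS.
Proof.
elim: t => [|b t IHt]; first by rewrite !big_nil (vsof0 e_basis).
by rewrite !big_cons vsof_addsmx IHt.
Qed.

Lemma vsof_cap_eq0 (A B : 'M[K]_(\dim {:V})) :
  (A :&: B = 0)%MS -> (vsof e A :&: vsof e B = 0)%VS.
Proof.
move=> AB0; apply/eqP; rewrite -(msof_eq0 e_basis) -submx0 -AB0 sub_capmx.
by rewrite !(msof_sub e_basis) capvSl capvSr.
Qed.

End VsofSums.

Section RootSpacesAsGeigenspaces.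
Variables (K : fieldType) (V : vectType K) (D : 'End(V)).
Let e := vbasis {:V}.
Let e_basis : basis_of {:V} e := vbasisP {:V}.

Lemma mxof_lfun_pow f k :
  mxof e e (lfun_pow f k) = iter k (fun A => A *m mxof e e f) 1%:M.
Proof.
elim: k => [|k IHk]; first by rewrite /lfun_pow /= mxof1 // (basis_free e_basis).
by rewrite /lfun_pow iterS (mxof_comp _ _ e_basis) -/(lfun_pow f k) IHk.
Qed.

Lemma root_space_vsof a : root_space D a = vsof e (geigenspace (mxof e e D) a).
Proof.
rewrite /root_space -/(lfun_pow _ _) (lker_ker e_basis) mxof_lfun_pow.
rewrite linearB linearZ /= mxof1 ?(basis_free e_basis) // scalemx1.
by rewrite geigenspace_iter.
Qed.

Lemma sum_root_space_vsof (t : seq K) :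
  (\sum_(b <- t) root_space D b)%VS =
  vsof e (\sum_(b <- t) geigenspace (mxof e e D) b)%MS.
Proof. by rewrite vsof_sumsmx //; apply: eq_bigr => b _; rewrite root_space_vsof. Qed.

Lemma root_space_cap_sum_eq0 a t : a \notin t ->
  (root_space D a :&: \sum_(b <- t) root_space D b = 0)%VS.
Proof.
move=> a_notin_t; rewrite root_space_vsof sum_root_space_vsof.
exact/vsof_cap_eq0/geigenspace_cap_sum_eq0.
Qed.

Lemma dim_sum_root_space t : uniq t ->
  \dim (\sum_(a <- t) root_space D a) = (\sum_(a <- t) \dim (root_space D a))%N.
Proof.
elim: t => [|a t IHt]; first by rewrite !big_nil dimv0.
case/andP=> a_notin_t t_uniq.
by rewrite !big_cons dimv_disjoint_sum ?root_space_cap_sum_eq0 // IHt.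
Qed.

End RootSpacesAsGeigenspaces.

Lemma sum_root_space_full (K : closedFieldType) (V : vectType K) (D : 'End(V)) :
  exists s : seq K, (\sum_(a <- s) root_space D a)%VS = fullv.
Proof.
have [s full_s] := sum_geigenspace_full (mxof (vbasis {:V}) (vbasis {:V}) D).
exists s; apply/eqP; rewrite eqEsubv subvf sum_root_space_vsof /=.
by rewrite -(msof_sub (vbasisP {:V})) (submx_trans (submx1 _) full_s).
Qed.

Section Gradings.
Variables (K : fieldType) (V : vectType K) (mul : V -> V -> V).
Variables (Gamma : eqType) (A : Gamma -> {vspace V}) (op : Gamma -> Gamma -> Gamma).
Hypothesis A_grading : is_grading mul A op.

Lemma grading_op_eq g h k :
  prod_nonzero mul (A g) (A h) -> prod_sub mul (A g) (A h) (A k) -> op g h = k.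
Proof.
move=> nz_gh sub_k; have [x [y [xg [yh xy_neq0]]]] := nz_gh.
apply/eqP; apply: contraNT xy_neq0 => op_neq_k.
have := A_grading.1 [:: op g h; k]; rewrite /= inE op_neq_k => /(_ isT).
rewrite directvE /= !big_cons !big_nil addv0 addn0 (dimv_add_leqif _ _).2.
by rewrite subv0 -memv0 => /eqP <-; rewrite memv_cap A_grading.2.2 ?sub_k.
Qed.

End Gradings.

Lemma semigroup_grading_assoc (K : fieldType) (V : vectType K) (mul : V -> V -> V)
    (Gamma : eqType) (A : Gamma -> {vspace V}) (op : Gamma -> Gamma -> Gamma) g h k :
  semigroup_grading mul A op ->
  prod_nonzero mul (A g) (A h) -> prod_nonzero mul (A h) (A k) ->
  prod_nonzero mul (A (op g h)) (A k) -> prod_nonzero mul (A g) (A (op h k)) ->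
  op (op g h) k = op g (op h k).
Proof.
move=> [G [m [phi [m_assoc [phi_inj phiM]]]]] gh hk gh_k g_hk.
by apply: phi_inj; rewrite !phiM // m_assoc.
Qed.

Section RootDecomposition.
Variables (K : fieldType) (V : vectType K) (mul : V -> V -> V).
Hypothesis mul_bilinear : bilinear_mul mul.
Variables (delta gamma : K) (D : 'End(V)).
Hypothesis D_derivation : dg_derivation mul delta gamma D.

Local Notation RD := (@root_decomp K V D).

Lemma is_root_mul a b : prod_nonzero mul (root_space D a) (root_space D b) ->
  is_root D (delta * a + gamma * b).
Proof.
move=> [x [y [xa [yb xy_neq0]]]]; apply: contraNneq xy_neq0 => root0.
by rewrite -memv0 -root0 (mul_root_space mul_bilinear D_derivation).
Qed.

(* Off the pairs with nonzero product the value of the operation is irrelevant;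
   [insubd g] just makes it total. *)
Definition root_op (g h : roots_of D) : roots_of D :=
  insubd g (delta * val g + gamma * val h).

Lemma val_root_op g h : prod_nonzero mul (RD g) (RD h) ->
  val (root_op g h) = delta * val g + gamma * val h.
Proof. by move=> gh; rewrite val_insubd is_root_mul. Qed.

Lemma root_decomp_mul_sub g h :
  prod_nonzero mul (RD g) (RD h) ->
  prod_sub mul (RD g) (RD h) (RD (root_op g h)).
Proof.
move=> gh x y xg yh; rewrite /root_decomp val_root_op //.
exact: mul_root_space.
Qed.

Lemma root_decomp_directv (s : seq (roots_of D)) :
  uniq s -> directv (\sum_(g <- s) RD g).
Proof.
move=> s_uniq; rewrite directvE /= /root_decomp -(big_map val xpredT).
by rewrite dim_sum_root_space ?big_map // map_inj_uniq //; apply: val_inj.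
Qed.

Lemma sum_root_decomp_pmap (s : seq K) :
  (\sum_(g <- pmap insub s) RD g)%VS = (\sum_(a <- s) root_space D a)%VS.
Proof.
rewrite /root_decomp -(big_map val xpredT) (pmap_filter (insubK _)) big_filter.
rewrite big_mkcond; apply: eq_bigr => a _; rewrite isSome_insub.
by case: ifPn => // /negbNE/eqP.
Qed.

Lemma grading_root_op_val op g h :
  is_grading mul RD op ->
  prod_nonzero mul (RD g) (RD h) ->
  val (op g h) = delta * val g + gamma * val h.
Proof.
move=> op_grading gh.
by rewrite (grading_op_eq op_grading gh (root_decomp_mul_sub gh)) val_root_op.
Qed.

End RootDecomposition.

Lemma root_decomp_grading (K : closedFieldType) (V : vectType K)
    (mul : V -> V -> V) (delta gamma : K) (D : 'End(V)) :
  bilinear_mul mul -> dg_derivation mul delta gamma D ->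
  is_grading mul (@root_decomp K V D) (@root_op _ _ delta gamma D).
Proof.
move=> mul_bilinear D_derivation; split; [|split].
- exact: root_decomp_directv.
- have [s full_s] := sum_root_space_full D.
  by exists (pmap insub s); rewrite sum_root_decomp_pmap.
- exact: root_decomp_mul_sub.
Qed.

Theorem mainTheorem2 (K : closedFieldType) (V : vectType K)
  (mul : V -> V -> V) (Hmul : bilinear_mul mul)
  (delta gamma : K) (D : 'End(V)) (HD : dg_derivation mul delta gamma D)
  (lam mu eta theta xi : K)
  (Hlam : is_root D lam) (Hmu : is_root D mu) (Heta : is_root D eta)
  (Htheta : is_root D theta) (Hxi : is_root D xi)
  (H1 : prod_nonzero mul (root_space D lam) (root_space D eta))
  (H2 : prod_sub mul (root_space D lam) (root_space D eta) (root_space D theta))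
  (H3 : prod_nonzero mul (root_space D theta) (root_space D mu))
  (H4 : prod_nonzero mul (root_space D eta) (root_space D mu))
  (H5 : prod_sub mul (root_space D eta) (root_space D mu) (root_space D xi))
  (H6 : prod_nonzero mul (root_space D lam) (root_space D xi))
  (Hne : (delta ^+ 2 - delta) * lam != (gamma ^+ 2 - gamma) * mu) :
  root_decomp_nonsemigroup_grading mul D.
Proof.
split; first by exists (@root_op _ _ delta gamma D); apply: root_decomp_grading.
move=> op op_grading op_semigroup.
pose r a (ra : is_root D a) : roots_of D := exist _ a ra.
have op_val := grading_root_op_val Hmul HD op_grading.
have op_lam_eta : op (r _ Hlam) (r _ Heta) = r _ Htheta.
  exact: (grading_op_eq (g := r _ Hlam) (h := r _ Heta) (k := r _ Htheta) op_grading
    H1 H2).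
have op_eta_mu : op (r _ Heta) (r _ Hmu) = r _ Hxi.
  exact: (grading_op_eq (g := r _ Heta) (h := r _ Hmu) (k := r _ Hxi) op_grading
    H4 H5).
have theta_E : theta = delta * lam + gamma * eta.
  by have := op_val (r _ Hlam) (r _ Heta) H1; rewrite op_lam_eta.
have xi_E : xi = delta * eta + gamma * mu.
  by have := op_val (r _ Heta) (r _ Hmu) H4; rewrite op_eta_mu.
have := semigroup_grading_assoc (g := r _ Hlam) (h := r _ Heta) (k := r _ Hmu)
  op_semigroup H1 H4.
rewrite op_lam_eta op_eta_mu => /(_ H3 H6) /(congr1 val).
rewrite (op_val (r _ Htheta) (r _ Hmu) H3) (op_val (r _ Hlam) (r _ Hxi) H6).
move=> /= assoc_eq.
have : (delta ^+ 2 - delta) * lam - (gamma ^+ 2 - gamma) * mu = 0.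
  by rewrite -(subrr (delta * lam + gamma * xi)) -{1}assoc_eq theta_E xi_E; ring.
by move/eqP; rewrite subr_eq0 (negbTE Hne).
Qed.
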